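(* Let $(\rhd,\nu,\phi)$ and $(\rhd,\nu,\phi')$ be two persistent craving representations (same $\rhd$ and $\nu$) with associated random choice rules $p$ and $p'$. Let $x\in X$ and $y\in X\setminus\{x\}$ with $y\ne M(\rhd,X\setminus\{x\})$. Then $$p(y,X)-p(y,X\setminus\{x\})>p'(y,X)-p'(y,X\setminus\{x\})$$ if and only if $\phi(M(\rhd,X\setminus\{x\}),x)>\phi'(M(\rhd,X\setminus\{x\}),x)$.
   Context: $X$ is a finite set, $\mathcal{X}$ its nonempty subsets, $\mathcal{L}(X)$ its linear orders, $M(\succ,A)$ the $\succ$-maximal element of $A$, $N(x,A)=\{\succ: x\succ y\ \forall y\in A\setminus\{x\}\}$. Given a linear order $\rhd$, the craving preferences $\{\succ_x\}_{x\in X}$ are: $x\succ_x y$ for all $y\neq x$, and for $y,z\ne x$, $y\succ_x z$ iff $y\rhd z$. A distribution $\nu$ supported on $\{\succ_x\}$ is craving monotonic w.r.t. $\rhd$ if $x\rhd y$ implies $\nu(\succ_x)>\nu(\succ_y)>0$. A persistence function is $\phi:X^2\to[0,1)$ with $\phi(x,x)=0$, $\phi(x,y)>0$ for $x\ne y$. A persistent craving representation $(\rhd,\nu,\phi)$ (with $\nu$ craving monotonic) determines the transition function $t(x,\succ_y)=\phi(x,y)\delta_{\succ_y}+(1-\phi(x,y))\nu$, $t(x,\succ)=\nu$ for $\succ$ outside the support of $\nu$; for each $A\in\mathcal{X}$, $\nu_A$ is the unique stationary distribution of the chain $m_A(\succ,\succ')=t_{\succ'}(M(\succ,A),\succ)$,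 and the associated random choice rule is $p(x,A)=\sum_{\succ\in N(x,A)}\nu_A(\succ)$. *)

From HB Require Import structures.
From mathcomp Require Import all_boot all_order all_algebra.
Set Implicit Arguments. Unset Strict Implicit. Unset Printing Implicit Defensive.
Import Order.TTheory GRing.Theory Num.Theory.
Local Open Scope ring_scope.

Section Defs.
Variable T : finType.

(* A (strict) linear order on T, encoded by its graph: x ≻ y iff r (x, y). *)
Definition is_lorder (r : {ffun T * T -> bool}) : bool :=
  [&& [forall a, ~~ r (a, a)],
      [forall a, forall b, forall c, r (a, b) && r (b, c) ==> r (a, c)] &
      [forall a, forall b, (a != b) ==> r (a, b) || r (b, a)]].

Definition lorder := {r : {ffun T * T -> bool} | is_lorder r}.

Definition lrel (r : lorder) (a b : T) : bool := val r (a, b).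

(* M(≻, A): the ≻-maximal element of A (None only when A is empty). *)
Definition M (r : lorder) (A : {set T}) : option T :=
  [pick z in A | [forall w in A, (w != z) ==> lrel r z w]].

Definition N (x : T) (A : {set T}) : {set lorder} :=
  [set r : lorder | [forall w in A, (w != x) ==> lrel r x w]].

Definition crave_fun (rhd : lorder) (x : T) : {ffun T * T -> bool} :=
  [ffun ab : T * T => (ab.1 != ab.2) &&
     ((ab.1 == x) || ((ab.2 != x) && lrel rhd ab.1 ab.2))].

Lemma crave_is_lorder rhd x : is_lorder (crave_fun rhd x).
Proof.
rewrite /crave_fun /lrel; case: rhd => r /= Hr.
move: Hr => /and3P [/forallP irr /forallP tr /forallP tot].
apply/and3P; split.
- by apply/forallP => a; rewrite ffunE eqxx.
- apply/forallP => a; apply/forallP => b; apply/forallP => c.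
  rewrite !ffunE /=; apply/implyP => /andP [/andP [ab H1] /andP [bc H2]].
  have irrc : ~~ r (c, c) := irr c.
  have trabc : r (a, b) -> r (b, c) -> r (a, c).
    by move=> h1 h2; move: (tr a) => /forallP/(_ b)/forallP/(_ c); rewrite h1 h2.
  have [ax|ax] := eqVneq a x.
    subst a; have [cx|cx] := eqVneq c x.
      by subst c; move: H2; rewrite eqxx (negbTE bc).
    by rewrite ?eqxx /= ?orTb ?andbT 1?eq_sym.
  move: H1; rewrite (negbTE ax) /= => /andP [bx rab].
  move: H2; rewrite (negbTE bx) /= => /andP [cx rbc].
  have rac := trabc rab rbc.
  rewrite cx rac /= andbT; apply/eqP => ac; move: rac irrc; rewrite ac.
  by move=> ->.
- apply/forallP => a; apply/forallP => b; apply/implyP => ab.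
  have ba : b != a by rewrite eq_sym.
  rewrite !ffunE /= ab ba /=.
  have [ax|ax] := eqVneq a x => //=.
  have [bx|bx] := eqVneq b x => //=.
  by move: (tot a) => /forallP/(_ b); rewrite ab.
Qed.

Definition crave (rhd : lorder) (x : T) : lorder :=
  exist _ (crave_fun rhd x) (crave_is_lorder rhd x).

Variable R : realFieldType.

Definition craving_monotonic (rhd : lorder) (nu : lorder -> R) : Prop :=
  [/\ (forall r, 0 <= nu r), \sum_r nu r = 1,
      (forall r, nu r != 0 -> exists x, r = crave rhd x) &
      (forall x y, lrel rhd x y -> nu (crave rhd y) < nu (crave rhd x) /\
                                   0 < nu (crave rhd y))].

Definition persistence (phi : T -> T -> R) : Prop :=
  forall x y, [/\ 0 <= phi x y, phi x y < 1, phi x x = 0 &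
                  (x != y -> 0 < phi x y)].

Definition persistent_craving_rep (rhd : lorder) (nu : lorder -> R)
    (phi : T -> T -> R) : Prop :=
  craving_monotonic rhd nu /\ persistence phi.

(* transition function t(x, ≻) (a distribution over L(X)), evaluated at ≻' *)
Definition trans (rhd : lorder) (nu : lorder -> R) (phi : T -> T -> R)
    (x : T) (r r' : lorder) : R :=
  match [pick y | r == crave rhd y] with
  | Some y => phi x y * (r' == r)%:R + (1 - phi x y) * nu r'
  | None => nu r'
  end.

Definition mA rhd nu phi (A : {set T}) (r r' : lorder) : R :=
  match M r A with
  | Some z => trans rhd nu phi z r r'
  | None => 0
  end.

Definition stationary (m : lorder -> lorder -> R) (pi : lorder -> R) : Prop :=
  [/\ (forall r, 0 <= pi r), \sum_r pi r = 1 &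
      forall r', pi r' = \sum_r pi r * m r r'].

Definition rcr_of rhd nu phi (p : T -> {set T} -> R) : Prop :=
  forall A : {set T}, A != set0 ->
    exists pi, stationary (mA rhd nu phi A) pi /\
               forall x, p x A = \sum_(r in N x A) pi r.

End Defs.

(* In the chain m_A a state >_w persists with probability phi(M(>_w, A), w)
   and otherwise resets to nu.  When A contains every element except possibly
   x, M(>_w, A) = w for w <> x and phi(w, w) = 0, so only >_x can persist; the
   balance equations then give nu_A(>) = nu(>) * (1 - q) / (1 - q + nu(>_x) q)
   for every > <> >_x, with q = phi(M(>_x, A), x).  As >_y is the only craving
   preference in N(y, A) charged by nu_A, p(y, A) is nu(>_y) times this
   factor, with q = 0 for A = X and q = phi(z, x) for A = X \ {x}.  The factor
   is strictly decreasing in q. *)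

From mathcomp Require Import all_boot all_order all_algebra.
From mathcomp Require Import zify ring lra.
Set Implicit Arguments. Unset Strict Implicit. Unset Printing Implicit Defensive.
Import Order.TTheory GRing.Theory Num.Theory.
Local Open Scope ring_scope.

Section LinearOrder.
Variables (T : finType) (r : lorder T).

Lemma lrel_irr a : ~~ lrel r a a.
Proof. by rewrite /lrel; case: r => f /= /and3P [/forallP]. Qed.

Lemma lrel_trans a b c : lrel r a b -> lrel r b c -> lrel r a c.
Proof.
rewrite /lrel; case: r => f /= /and3P [_ /forallP trans _] fab fbc.
by move: (trans a) => /forallP/(_ b)/forallP/(_ c); rewrite fab fbc.
Qed.

Lemma lrel_total a b : a != b -> lrel r a b || lrel r b a.
Proof.
rewrite /lrel; case: r => f /= /and3P [_ _ /forallP total] ab.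
by move: (total a) => /forallP/(_ b); rewrite ab.
Qed.

Lemma lrel_asym a b : lrel r a b -> ~~ lrel r b a.
Proof. by move=> rab; apply: contraNN (lrel_irr a); apply: lrel_trans. Qed.

Lemma M_Some (A : {set T}) c :
  c \in A -> {in A, forall w, w != c -> lrel r c w} -> M r A = Some c.
Proof.
move=> cA cmax; rewrite /M; case: pickP => [c' /andP [c'A /forall_inP c'max]|].
  have [-> // | c'c] := eqVneq c' c; congr Some.
  by move: (c'max c cA) (lrel_asym (cmax c' c'A c'c)); rewrite eq_sym c'c /= => ->.
move/(_ c); rewrite cA /= => /negP []; apply/forall_inP => w wA.
by apply/implyP; apply: cmax.
Qed.

Lemma M_SomeP (A : {set T}) c :
  M r A = Some c -> c \in A /\ {in A, forall w, w != c -> lrel r c w}.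
Proof.
rewrite /M; case: pickP => // c' /andP [c'A /forall_inP c'max] [<-].
by split=> // w /c'max /implyP.
Qed.

Lemma M_exists (A : {set T}) : A != set0 -> exists c, M r A = Some c.
Proof.
case/set0Pn => c0 c0A.
pose below c := [set w in A | lrel r c w].
have [c cA cmax] := @arg_maxnP T c0 (mem A) (fun c => #|below c|) c0A.
have {}cA : c \in A := cA.
exists c; apply: M_Some => // w wA wc.
have /orP [rwc | //] := lrel_total wc; exfalso.
have lt_below : (#|below c| < #|below w|)%N.
  have sub : c |: below c \subset below w.
    apply/subsetP => v; rewrite in_setU1 => /orP [/eqP -> | ].
      by rewrite inE cA rwc.
    by rewrite !inE => /andP [-> /(lrel_trans rwc)].
  apply: leq_trans (subset_leq_card sub).
  by rewrite cardsU1 inE (negbTE (lrel_irr c)) andbF.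
by have := cmax w wA; lia.
Qed.

Lemma in_N_M (x : T) (A : {set T}) : x \in A -> (r \in N x A) = (M r A == Some x).
Proof.
move=> xA; rewrite inE; apply/forall_inP/eqP => [xmax | /M_SomeP [_ xmax] w wA].
  by apply: M_Some => // w /xmax /implyP.
by apply/implyP; apply: xmax.
Qed.

End LinearOrder.

Section Craving.
Variables (T : finType) (rhd : lorder T).

Lemma crave_rel w a b :
  lrel (crave rhd w) a b = (a != b) && ((a == w) || (b != w) && lrel rhd a b).
Proof. by rewrite /lrel ffunE. Qed.

Lemma crave_inj : injective (crave rhd).
Proof.
move=> a b eq_ab; apply/eqP; apply: contraT => ab.
by have := crave_rel a a b; rewrite eq_ab crave_rel ab (negbTE ab) !eqxx.
Qed.

Lemma pick_crave w : [pick v | crave rhd w == crave rhd v] = Some w.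
Proof. by case: pickP => [v /eqP/crave_inj -> | /(_ w)]; rewrite ?eqxx. Qed.

Lemma M_crave_in (A : {set T}) w : w \in A -> M (crave rhd w) A = Some w.
Proof. by move=> wA; apply: M_Some => // v _ vw; rewrite crave_rel eqxx eq_sym vw. Qed.

Lemma M_crave_notin (A : {set T}) x z :
  x \notin A -> M rhd A = Some z -> M (crave rhd x) A = Some z.
Proof.
move=> xA /M_SomeP [zA zmax]; apply: M_Some => // w wA wz.
have neq_x v : v \in A -> v != x by apply: contraTneq => ->.
by rewrite crave_rel eq_sym wz (negbTE (neq_x z zA)) neq_x //= zmax.
Qed.

Lemma crave_in_N (A : {set T}) y w :
  y \in A -> w \in A -> (crave rhd w \in N y A) = (w == y).
Proof. by move=> yA wA; rewrite in_N_M // M_crave_in. Qed.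

Lemma craving_monotonic_gt0 (R : realFieldType) (nu : lorder T -> R) a b :
  craving_monotonic rhd nu -> a != b -> 0 < nu (crave rhd a).
Proof.
case=> _ _ _ mono /(lrel_total rhd) /orP [/mono [lt_ba gt0_b] | /mono [] //].
exact: lt_trans lt_ba.
Qed.

End Craving.

Definition stationary_scale (R : realFieldType) (a q : R) : R :=
  (1 - q) / (1 - q + a * q).

Lemma stationary_scale0 (R : realFieldType) (a : R) : stationary_scale a 0 = 1.
Proof. by rewrite /stationary_scale subr0 mulr0 addr0 divr1. Qed.

Lemma stationary_scale_lt (R : realFieldType) (a q q' : R) :
  0 < a -> 0 <= q -> q < 1 -> 0 <= q' -> q' < 1 ->
  (stationary_scale a q < stationary_scale a q') = (q' < q).
Proof.
move=> a_gt0 q_ge0 q_lt1 q'_ge0 q'_lt1.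
have den_gt0 v : 0 <= v -> v < 1 -> 0 < 1 - v + a * v by nra.
rewrite /stationary_scale ltr_pdivrMr ?den_gt0 // mulrAC ltr_pdivlMr ?den_gt0 //.
by apply/idP/idP => ?; nra.
Qed.

Section ResettingChain.
Variables (R : realFieldType) (I : finType) (nu s pi : I -> R) (m : I -> I -> R).
Hypothesis m_reset : forall r r', m r r' = s r * (r' == r)%:R + (1 - s r) * nu r'.
Hypothesis pi_invariant : forall r', pi r' = \sum_r pi r * m r r'.

Lemma reset_balance r' : pi r' * (1 - s r') = nu r' * \sum_r pi r * (1 - s r).
Proof.
set K := \sum_r _.
have pi_r' : pi r' = pi r' * s r' + nu r' * K.
  rewrite {1}pi_invariant; under eq_bigr => r _ do rewrite m_reset mulrDr.
  rewrite big_split /=; congr (_ + _).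
    rewrite (bigD1 r') //= eqxx mulr1 big1 ?addr0 // => r.
    by rewrite eq_sym => /negbTE ->; rewrite !mulr0.
  by rewrite mulr_sumr; apply: eq_bigr => r _; ring.
by rewrite mulrBr mulr1 {1}pi_r'; ring.
Qed.

Hypotheses (nu_sum1 : \sum_r nu r = 1) (pi_sum1 : \sum_r pi r = 1).
Variable r0 : I.
Hypotheses (s_single : forall r, r != r0 -> s r = 0) (s_lt1 : s r0 < 1).

Lemma stationary_single_reset r :
  r != r0 -> pi r = nu r * stationary_scale (nu r0) (s r0).
Proof.
pose K := \sum_r pi r * (1 - s r).
have pi_out v : v != r0 -> pi v = nu v * K.
  by move=> vr0; rewrite -reset_balance s_single // subr0 mulr1.
have nu_out : \sum_(v | v != r0) nu v = 1 - nu r0.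
  by rewrite -nu_sum1 [in RHS](bigD1 r0) //= addrAC subrr add0r.
have pi_split : pi r0 + (1 - nu r0) * K = 1.
  rewrite -nu_out -pi_sum1 [in RHS](bigD1 r0) //= mulr_suml.
  by congr (_ + _); apply: eq_bigr => v /pi_out.
have K_scale : K * (1 - s r0 + nu r0 * s r0) = 1 - s r0.
  have := congr1 ( *%R^~ (1 - s r0)) pi_split.
  by rewrite /= mulrDl reset_balance -/K mul1r => scaled; rewrite -[in RHS]scaled; ring.
have den_neq0 : 1 - s r0 + nu r0 * s r0 != 0.
  by apply: contra_ltN s_lt1 => /eqP den0; rewrite -subr_le0 -K_scale den0 mulr0.
by move=> rr0; rewrite pi_out // /stationary_scale -[X in X / _]K_scale mulfK.
Qed.

End ResettingChain.

Section CravingChain.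
Variables (R : realFieldType) (T : finType) (rhd : lorder T).
Variables (nu : lorder T -> R) (phi : T -> T -> R).

Definition stay_prob (A : {set T}) (r : lorder T) : R :=
  if M r A is Some c then
    if [pick w | r == crave rhd w] is Some w then phi c w else 0
  else 0.

Lemma mA_reset (A : {set T}) : A != set0 -> forall r r',
  mA rhd nu phi A r r' = stay_prob A r * (r' == r)%:R + (1 - stay_prob A r) * nu r'.
Proof.
move=> A0 r r'; rewrite /mA /stay_prob /trans; have [c ->] := M_exists r A0.
by case: pickP => [w _ | _] //; rewrite mul0r add0r subr0 mul1r.
Qed.

Lemma stay_prob_crave (A : {set T}) w c :
  M (crave rhd w) A = Some c -> stay_prob A (crave rhd w) = phi c w.
Proof. by move=> Mc; rewrite /stay_prob Mc pick_crave. Qed.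

Lemma stay_prob0 (A : {set T}) r : (forall w, phi w w = 0) ->
  (forall w, r = crave rhd w -> w \in A) -> stay_prob A r = 0.
Proof.
move=> phi_diag0 rA; rewrite /stay_prob; case: pickP => [w /eqP rw | _].
  by rewrite rw M_crave_in ?rA.
by case: (M r A).
Qed.

Lemma choice_prob_single_reset p (A : {set T}) x y c :
  persistent_craving_rep rhd nu phi -> rcr_of rhd nu phi p ->
  ~: [set x] \subset A -> y \in A -> y != x ->
  M (crave rhd x) A = Some c -> c != y ->
  p y A = nu (crave rhd y) * stationary_scale (nu (crave rhd x)) (phi c x).
Proof.
move=> [[_ nu_sum1 nu_supp _] phi_pers] rcr subA yA yx Mx cy.
have A0 : A != set0 by apply/set0Pn; exists y.
have [pi [[_ pi_sum1 pi_inv] ->]] := rcr A A0.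
have pi_out r : r != crave rhd x ->
    pi r = nu r * stationary_scale (nu (crave rhd x)) (phi c x).
  rewrite -(stay_prob_crave Mx).
  apply: (stationary_single_reset (mA_reset A0) pi_inv nu_sum1 pi_sum1).
  - move=> v vx; apply: stay_prob0 => [w | w vw]; first by case: (phi_pers w w).
    by apply: (subsetP subA); rewrite !inE; apply: contraNneq vx => <-; rewrite vw.
  - by rewrite (stay_prob_crave Mx); case: (phi_pers c x).
have N_crave r : r \in N y A -> r != crave rhd y -> pi r = 0.
  move=> rN ry; have [rx | rx] := eqVneq r (crave rhd x).
    by move: rN; rewrite rx in_N_M // Mx (inj_eq (@Some_inj _)) (negbTE cy).
  rewrite pi_out //; have [/eqP -> | /nu_supp [w rw]] := boolP (nu r == 0).
    by rewrite mul0r.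
  have wA : w \in A.
    by apply: (subsetP subA); rewrite !inE; apply: contraNneq rx => <-; rewrite rw.
  by move: rN ry; rewrite rw crave_in_N // => /eqP ->; rewrite eqxx.
rewrite (bigD1 (crave rhd y)) ?crave_in_N ?eqxx //= big1 ?addr0 => [|r /andP []].
  by rewrite pi_out // (inj_eq (@crave_inj _ rhd)).
exact: N_crave.
Qed.

End CravingChain.

Theorem proposition2 (R : realFieldType) (T : finType) (rhd : lorder T)
    (nu : lorder T -> R) (phi phi' : T -> T -> R) (p p' : T -> {set T} -> R)
    (x y z : T) :
  persistent_craving_rep rhd nu phi ->
  persistent_craving_rep rhd nu phi' ->
  rcr_of rhd nu phi p ->
  rcr_of rhd nu phi' p' ->
  y != x ->
  M rhd (~: [set x]) = Some z ->
  y != z ->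
  (p' y setT - p' y (~: [set x]) < p y setT - p y (~: [set x]) <->
   phi' z x < phi z x).
Proof.
move=> rep rep' rcr rcr' yx Mz yz.
have xy : x != y by rewrite eq_sym.
have zy : z != y by rewrite eq_sym.
have yA : y \in ~: [set x] by rewrite !inE.
have xA : x \notin ~: [set x] by rewrite !inE eqxx.
have MxX := M_crave_in rhd (in_setT x).
have MxA := M_crave_notin xA Mz.
rewrite (choice_prob_single_reset rep rcr (subsetT _) (in_setT y) yx MxX xy).
rewrite (choice_prob_single_reset rep' rcr' (subsetT _) (in_setT y) yx MxX xy).
rewrite (choice_prob_single_reset rep rcr (subxx _) yA yx MxA zy).
rewrite (choice_prob_single_reset rep' rcr' (subxx _) yA yx MxA zy).
case: rep rep' => [mono pers] [_ pers'].
have [[_ _ phi_xx _] [_ _ phi'_xx _]] := (pers x x, pers' x x).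
have [[q_ge0 q_lt1 _ _] [q'_ge0 q'_lt1 _ _]] := (pers z x, pers' z x).
rewrite phi_xx phi'_xx !stationary_scale0 ltrD2l ltrN2.
have nu_x_gt0 := craving_monotonic_gt0 mono xy.
by rewrite ltr_pM2l ?(craving_monotonic_gt0 mono yx) // stationary_scale_lt.
Qed.
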